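(* For every positive integer $q$ divisible by $3$, there exists a $q$-solvable undirected graph on $4q/3$ vertices with clique number $2q/3$.
   Context: A directed graph $D=(V,E)$ has arcs $E \subseteq \{(u,v)\in V^2 : u \neq v\}$; an undirected graph is identified with the directed graph having both arcs $(u,v)$ and $(v,u)$ for each edge. $N^-(v)=\{u:(u,v)\in E\}$. For $q\ge2$ let $[q]=\{0,\dots,q-1\}$. A $D$-function over $[q]$ is a map $f=(f_v)_{v\in V}:[q]^V\to[q]^V$ with each $f_v(x)$ depending only on $(x_u)_{u\in N^-(v)}$. $D$ is $q$-solvable if some $D$-function $f$ over $[q]$ has the property that for every $x\in[q]^V$ there is $v$ with $f_v(x)=x_v$. The clique number of an undirected graph is the size of its largest complete subgraph. *)

From mathcomp Require Import all_boot.
Set Implicit Arguments. Unset Strict Implicit. Unset Printing Implicit Defensive.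

(* A directed graph on a finite vertex type V is a relation e : rel V,
   with e u v meaning the arc (u,v); arcs are loopless. *)
Definition loopless (V : finType) (e : rel V) : Prop := irreflexive e.

Definition undirected_graph (V : finType) (e : rel V) : Prop :=
  irreflexive e /\ symmetric e.

Definition D_function (V : finType) (e : rel V) (q : nat)
  (f : (V -> 'I_q) -> (V -> 'I_q)) : Prop :=
  forall (v : V) (x y : V -> 'I_q),
    (forall u, e u v -> x u = y u) -> f x v = f y v.

Definition q_solvable (V : finType) (e : rel V) (q : nat) : Prop :=
  exists f : (V -> 'I_q) -> (V -> 'I_q),
    D_function e f /\ forall x : V -> 'I_q, exists v : V, f x v = x v.

Definition is_clique (V : finType) (e : rel V) (S : {set V}) : bool :=
  [forall x in S, forall y in S, (x != y) ==> e x y].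

Definition clique_number (V : finType) (e : rel V) : nat :=
  \max_(S : {set V} | is_clique e S) #|S|.

(* Write q = 3k.  The graph is the blow-up C4[K_k] of the 4-cycle: every vertex
   of C4 is replaced by a k-clique ("blob"), and two blobs are completely joined
   when the corresponding vertices of C4 are adjacent.
   - Blow-up theorem: if D is r-solvable then D[K_k] is (r k)-solvable.  Each
     blob reduces the sum of its values modulo r k to a "blob value" in [r];
     the blob values are guessed with the r-strategy of D, and the k vertices
     of a blob cover the k possible remainders of the blob sum modulo k.
   - C4 is 3-solvable, by an explicit affine rule modulo 3.
   - The clique number of D[K_k] is k times that of D, and that of C4 is 2.
   Finally, solvability, undirectedness and clique number are invariant under
   relabelling the vertices along a bijection, which transports the blow-up,
   whose vertex set is 'I_4 * 'I_k, to the vertex set 'I_(4k) of the statement. *)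

From mathcomp Require Import all_boot.

Set Implicit Arguments.
Unset Strict Implicit.
Unset Printing Implicit Defensive.

Lemma is_cliqueP (V : finType) (e : rel V) (S : {set V}) :
  reflect (forall x y, x \in S -> y \in S -> x != y -> e x y) (is_clique e S).
Proof.
apply: (iffP forallP) => [cS x y xS yS | cS x].
  by move/implyP: (cS x) => /(_ xS) /forallP /(_ y) /implyP /(_ yS) /implyP.
apply/implyP => xS; apply/forallP => y; apply/implyP => yS; apply/implyP.
exact: cS.
Qed.

Lemma clique_number_witness (V : finType) (e : rel V) :
  exists2 C : {set V}, is_clique e C & #|C| = clique_number e.
Proof.
have clique0 : is_clique e set0 by apply/is_cliqueP => x y; rewrite inE.
rewrite /clique_number (bigmax_eq_arg set0) //.
by case: arg_maxnP => // C cC _; exists C.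
Qed.

Lemma clique_number_embed (V W : finType) (eW : rel W) (eV : rel V) (h : W -> V) :
  injective h -> (forall a b, a != b -> eW a b -> eV (h a) (h b)) ->
  clique_number eW <= clique_number eV.
Proof.
move=> h_inj h_edge; apply/bigmax_leqP => S /is_cliqueP cS.
rewrite -(card_imset S h_inj); apply: leq_bigmax_cond.
apply/is_cliqueP => _ _ /imsetP [a aS ->] /imsetP [b bS ->] hab.
have ab : a != b by apply: contraNneq hab => ->.
exact: h_edge ab (cS a b aS bS ab).
Qed.

Section Relabelling.
Variables (V W : finType) (h : W -> V) (h' : V -> W).
Hypotheses (hK : cancel h h') (h'K : cancel h' h).
Variable e : rel V.

Lemma relpre_undirected : undirected_graph e -> undirected_graph (relpre h e).
Proof. by case=> irr sym; split=> [x | x y]; [exact: irr | exact: sym]. Qed.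

Lemma relpre_solvable q : q_solvable e q -> q_solvable (relpre h e) q.
Proof.
case=> F [F_local F_hits]; exists (fun x w => F (x \o h') (h w)); split.
  move=> w x y xy; apply: F_local => u uw /=.
  by apply: xy; rewrite /relpre /= h'K.
move=> x; have [v hit] := F_hits (x \o h').
by exists (h' v); rewrite h'K.
Qed.

Lemma relpre_clique_number : clique_number (relpre h e) = clique_number e.
Proof.
apply/anti_leq/andP; split; first exact: clique_number_embed (can_inj hK) _.
by apply: (clique_number_embed (can_inj h'K)) => a b _; rewrite /relpre /= !h'K.
Qed.

End Relabelling.

Lemma modn_add_subK (m a b : nat) : a < m -> ((a + b) %% m + (m - b %% m)) %% m = a.
Proof.
move=> a_lt_m; have m_gt0 : 0 < m by apply: leq_ltn_trans a_lt_m.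
have b_le_m : b %% m <= m by rewrite ltnW ?ltn_pmod.
rewrite modnDml -addnA {1}(divn_eq b m) -addnA subnKC //.
by rewrite -mulSnr addnC modnMDl modn_small.
Qed.

Section Blowup.
Variables (V : finType) (e : rel V) (k : nat).

Definition blowup : rel (V * 'I_k) :=
  fun a b => e a.1 b.1 || (a.1 == b.1) && (a.2 != b.2).

Lemma blowup_undirected : undirected_graph e -> undirected_graph blowup.
Proof.
case=> irr sym; split=> [a | a b]; rewrite /blowup /=; first by rewrite (irr a.1) !eqxx.
by rewrite (sym a.1) (eq_sym a.1) (eq_sym a.2).
Qed.

(* A clique of the blow-up projects onto a clique of D and lies in the product
   of that projection with 'I_k; conversely C x 'I_k is a clique for a clique C. *)
Lemma clique_number_blowup : clique_number blowup = clique_number e * k.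
Proof.
apply/anti_leq/andP; split.
  apply/bigmax_leqP => S /is_cliqueP cS.
  set P := [set a.1 | a in S].
  have cP : is_clique e P.
    apply/is_cliqueP => _ _ /imsetP [a aS ->] /imsetP [b bS ->] ab.
    have ab2 : a != b by apply: contraNneq ab => ->.
    by have := cS a b aS bS ab2; rewrite /blowup /= (negbTE ab) orbF.
  have SP : S \subset setX P [set: 'I_k].
    by apply/subsetP => -[u i] uiS; rewrite in_setX (imset_f _ uiS) in_setT.
  apply: leq_trans (subset_leq_card SP) _.
  by rewrite cardsX cardsT card_ord leq_mul ?leq_bigmax_cond.
have [C /is_cliqueP cC <-] := clique_number_witness e.
have -> : #|C| * k = #|setX C [set: 'I_k]| by rewrite cardsX cardsT card_ord.
apply: leq_bigmax_cond; apply/is_cliqueP => -[u i] [v j].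
rewrite !in_setX !in_setT !andbT /blowup /= => uC vC.
case: (eqVneq u v) => [<- | uv]; last by rewrite cC.
by rewrite xpair_eqE !eqxx /= => ->; rewrite orbT.
Qed.

Section Solvability.
Variable r : nat.
Hypotheses (r_gt0 : 0 < r) (k_gt0 : 0 < k).
Local Notation m := (r * k).

Lemma blowup_modulus_gt0 : 0 < m.
Proof. by rewrite muln_gt0 r_gt0. Qed.

Definition blob_sum (x : V * 'I_k -> 'I_m) (u : V) : nat := \sum_(i < k) x (u, i).

Lemma blob_value_subproof x u : blob_sum x u %% m %/ k < r.
Proof. by rewrite ltn_divLR // ltn_pmod ?blowup_modulus_gt0. Qed.

Definition blob_value x u : 'I_r := Ordinal (blob_value_subproof x u).

(* What vertex a sees of its own blob: the sum of the other copies. *)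
Definition rest_sum (x : V * 'I_k -> 'I_m) (a : V * 'I_k) : nat :=
  \sum_(i < k | i != a.2) x (a.1, i).

(* Vertex (v, j) bets that the blob sum of v is F(blob values)_v * k + j
   modulo r k, and guesses the value that would make this true. *)
Definition blowup_guess (F : (V -> 'I_r) -> V -> 'I_r) x (a : V * 'I_k) : 'I_m :=
  Ordinal (ltn_pmod (F (blob_value x) a.1 * k + a.2 + (m - rest_sum x a %% m))
                    blowup_modulus_gt0).

(* The guess of (v, j) only uses its own blob and the blobs of in-neighbours of
   v, all of which are in-neighbours of (v, j) in the blow-up. *)
Lemma blowup_guess_local F : D_function e F -> D_function blowup (blowup_guess F).
Proof.
move=> F_local [v j] x y xy; apply: val_inj => /=.
have rest : rest_sum x (v, j) = rest_sum y (v, j).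
  by apply: eq_bigr => i ij; rewrite xy // /blowup /= eqxx ij orbT.
have blob : F (blob_value x) v = F (blob_value y) v.
  apply: F_local => u uv; apply: val_inj => /=; rewrite /blob_sum.
  by congr (_ %% _ %/ _); apply: eq_bigr => i _; rewrite xy // /blowup /= uv.
by rewrite rest blob.
Qed.

(* If F guesses the blob value of u correctly, the copy of u whose index is the
   blob sum modulo r k reduced modulo k guesses correctly. *)
Lemma blowup_guess_hits F x u :
  F (blob_value x) u = blob_value x u -> exists j, blowup_guess F x (u, j) = x (u, j).
Proof.
move=> hit; set s := blob_sum x u.
pose j := Ordinal (ltn_pmod (s %% m) k_gt0).
exists j; apply: val_inj => /=.
have target : F (blob_value x) u * k + j = s %% m by rewrite hit /= -divn_eq.
have split_sum : s = x (u, j) + rest_sum x (u, j) by rewrite /s /blob_sum (bigD1 j).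
by rewrite target {1}split_sum modn_add_subK.
Qed.

Theorem blowup_solvable : q_solvable e r -> q_solvable blowup m.
Proof.
case=> F [F_local F_hits]; exists (blowup_guess F); split.
  exact: blowup_guess_local.
move=> x; have [u hit] := F_hits (blob_value x).
by have [j hj] := blowup_guess_hits hit; exists (u, j).
Qed.

End Solvability.
End Blowup.
Arguments blowup {V} e k.

(* The 4-cycle 0 - 1 - 2 - 3 - 0: two vertices are adjacent iff their sum is odd. *)
Definition c4 : rel 'I_4 := fun u v => odd (u + v).

Lemma c4_undirected : undirected_graph c4.
Proof. by split=> [u | u v]; rewrite /c4 ?addnn ?odd_double // addnC. Qed.

Lemma c4_neighbours (v : 'I_4) : c4 (ord_pred v) v && c4 (ordS v) v.
Proof. by case: v => [[|[|[|[|]]]] ?]. Qed.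

(* Parity is injective on a clique of C4, so cliques have at most 2 vertices. *)
Lemma clique_number_c4 : clique_number c4 = 2.
Proof.
apply/anti_leq/andP; split.
  apply/bigmax_leqP => S /is_cliqueP cS.
  have parity_inj : {in S &, injective (fun v : 'I_4 => odd v)}.
    move=> u v uS vS same; case: (eqVneq u v) => // uv.
    by have := cS u v uS vS uv; rewrite /c4 oddD same addbb.
  by rewrite -(card_in_imset parity_inj) (leq_trans (max_card _)) ?card_bool.
apply: (bigmax_sup [set ord0; ord_max]); last by rewrite cards2.
by apply/is_cliqueP => u v; rewrite !inE => /orP[]/eqP-> /orP[]/eqP->.
Qed.

(* Writing L_v for (value at v) minus
   (guess of v), one has L0 + L1 + L3 = 0 and L2 = L0 - L1 modulo 3; three
   nonzero residues summing to 0 are equal, so the L_v cannot all be nonzero. *)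
Definition c4_rule (v l r : nat) : nat :=
  match v with 0 => l + r | 1 | 2 => 2 * l + r | _ => 2 * l + 2 * r end.

Definition c4_guess (y : 'I_4 -> 'I_3) (v : 'I_4) : 'I_3 :=
  Ordinal (ltn_pmod (c4_rule v (y (ord_pred v)) (y (ordS v))) (isT : 0 < 3)).

Lemma c4_rule_hits y0 y1 y2 y3 : y0 < 3 -> y1 < 3 -> y2 < 3 -> y3 < 3 ->
  [|| c4_rule 0 y3 y1 %% 3 == y0, c4_rule 1 y0 y2 %% 3 == y1,
      c4_rule 2 y1 y3 %% 3 == y2 | c4_rule 3 y2 y0 %% 3 == y3].
Proof.
by case: y0 => [|[|[|]]] //; case: y1 => [|[|[|]]] //;
   case: y2 => [|[|[|]]] //; case: y3 => [|[|[|]]].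
Qed.

Lemma c4_guess_local : D_function c4 c4_guess.
Proof.
move=> v x y xy; case/andP: (c4_neighbours v) => pred_v succ_v.
by apply: val_inj; rewrite /= !xy.
Qed.

Lemma c4_guess_hits (y : 'I_4 -> 'I_3) : exists v, c4_guess y v = y v.
Proof.
pose z i : nat := y (inord i).
have guessE (v : 'I_4) :
    c4_guess y v = c4_rule v (z ((v + 3) %% 4)) (z ((v + 1) %% 4)) %% 3 :> nat.
  rewrite /= /z; congr (c4_rule _ (y _) (y _) %% 3); apply: ord_inj;
    rewrite /= inordK ?ltn_pmod //; [by rewrite addnS | by rewrite addn1].
case/or4P: (c4_rule_hits (ltn_ord (y (inord 0))) (ltn_ord (y (inord 1)))
                         (ltn_ord (y (inord 2))) (ltn_ord (y (inord 3)))) => /eqP hit.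
- by exists (inord 0); apply: ord_inj; rewrite guessE inordK.
- by exists (inord 1); apply: ord_inj; rewrite guessE inordK.
- by exists (inord 2); apply: ord_inj; rewrite guessE inordK.
- by exists (inord 3); apply: ord_inj; rewrite guessE inordK.
Qed.

Lemma c4_solvable : q_solvable c4 3.
Proof. by exists c4_guess; split; [exact: c4_guess_local | exact: c4_guess_hits]. Qed.

Section PairIndex.
Variables m n : nat.

Lemma card_ord_pair : #|{: 'I_m * 'I_n}| = m * n.
Proof. by rewrite card_prod !card_ord. Qed.

Definition pair_of_index (i : 'I_(m * n)) : 'I_m * 'I_n :=
  enum_val (cast_ord (esym card_ord_pair) i).

Definition index_of_pair (a : 'I_m * 'I_n) : 'I_(m * n) :=
  cast_ord card_ord_pair (enum_rank a).

Lemma pair_of_indexK : cancel pair_of_index index_of_pair.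
Proof. by move=> i; rewrite /index_of_pair /pair_of_index enum_valK cast_ordKV. Qed.

Lemma index_of_pairK : cancel index_of_pair pair_of_index.
Proof. by move=> a; rewrite /index_of_pair /pair_of_index cast_ordK enum_rankK. Qed.

End PairIndex.
Arguments pair_of_indexK {m n}.
Arguments index_of_pairK {m n}.

Theorem corollary6 (q : nat) :
  0 < q -> 3 %| q ->
  exists e : rel 'I_(4 * q %/ 3),
    undirected_graph e /\ q_solvable e q /\ clique_number e = 2 * q %/ 3.
Proof.
move=> q_gt0 /dvdnP [k q_eq]; subst q.
have k_gt0 : 0 < k by move: q_gt0; rewrite muln_gt0 => /andP [].
rewrite !mulnA !mulnK //.
exists (relpre (@pair_of_index 4 k) (blowup c4 k)); split; [|split].
- exact/relpre_undirected/blowup_undirected/c4_undirected.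
- rewrite [k * 3]mulnC.
  exact: relpre_solvable index_of_pairK _ _ (blowup_solvable (ltn0Sn 2) k_gt0 c4_solvable).
- by rewrite (relpre_clique_number pair_of_indexK index_of_pairK)
     clique_number_blowup clique_number_c4.
Qed.
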